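(* Let $m\ge 1$ and let $A_1,\dots,A_m$ be complex matrices, $A_j\in\mathbb{C}^{r_j\times n}$, and let $A=\begin{bmatrix}A_1\\ \vdots\\ A_m\end{bmatrix}\in\mathbb{C}^{r\times n}$ ($r=\sum_j r_j$) have full row rank. Fix $\gamma>0$. Define the block matrices $$D_\gamma=\operatorname{diag}\big(\gamma I+A_1A_1^*,\dots,\gamma I+A_mA_m^*\big),\qquad L=\big(L_{ij}\big)_{i,j=1}^m,\ L_{ij}=\begin{cases}A_iA_j^* & i>j,\\ 0 & i\le j,\end{cases}$$ so that $\gamma I+AA^*=D_\gamma+L+L^*$, and set $$M_\gamma=(D_\gamma+L)^{-1},\quad Q_\gamma=A^*M_\gamma A,\quad B_\gamma=I-Q_\gamma,\quad \tilde B_\gamma=B_\gamma P,\quad R_\gamma=(D_{2\gamma})^{1/2}M_\gamma A,$$ where $P$ is the orthogonal projection of $\mathbb{C}^n$ onto the range $\mathcal{R}(A^* )$, $D_{2\gamma}$ is $D_\gamma$ with $\gamma$ replaced by $2\gamma$, and $(D_{2\gamma})^{1/2}$ is its Hermitian positive definite square root. Let $\sigma_\gamma$ be the smallest nonzero singular value of $R_\gamma$. Then $\sigma_\gamma\le 1$ and, in the spectral norm, $$\|\tilde B_\gamma\|=\sqrt{1-\sigma_\gamma^2}.$$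
   Context: $A^*$ denotes the conjugate transpose. $D_\gamma+L$ is block lower triangular with invertible (Hermitian positive definite) diagonal blocks, so $M_\gamma$ is well defined. $\|\cdot\|$ is the operator 2-norm. *)

From HB Require Import structures.
From mathcomp Require Import all_boot all_order all_algebra.
Set Implicit Arguments. Unset Strict Implicit. Unset Printing Implicit Defensive.
Import Order.TTheory GRing.Theory Num.Theory.
Local Open Scope ring_scope.

(* Complex scalars: any numClosedFieldType C (e.g. algC, or R[i]); conjugation
   is Num.conj, and "real" quantities are elements of C lying in Num.real. *)
Section Defs.
Variable C : numClosedFieldType.

Definition ctmx (p q : nat) (M : 'M[C]_(p, q)) : 'M[C]_(q, p) :=
  (map_mx Num.conj M)^T.

Definition vnorm (p : nat) (x : 'cV[C]_p) : C := sqrtC (\sum_i `|x i 0| ^+ 2).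

Definition is_opnorm (p q : nat) (B : 'M[C]_(p, q)) (s : C) : Prop :=
  [/\ 0 <= s,
      forall x : 'cV[C]_q, vnorm (B *m x) <= s * vnorm x
    & forall t, 0 <= t -> (forall x : 'cV[C]_q, vnorm (B *m x) <= t * vnorm x) -> s <= t].

Definition hermitian (p : nat) (M : 'M[C]_p) : Prop := ctmx M = M.

Definition herm_posdef (p : nat) (M : 'M[C]_p) : Prop :=
  hermitian M /\ forall x : 'cV[C]_p, x != 0 -> 0 < (ctmx x *m M *m x) 0 0.

(* P is the orthogonal projection onto the column space (range) of X *)
Definition orth_proj_onto (p k : nat) (P : 'M[C]_p) (X : 'M[C]_(p, k)) : Prop :=
  [/\ hermitian P, P *m P = P & (P^T == X^T)%MS].

Definition sing_val (p q : nat) (M : 'M[C]_(p, q)) (s : C) : Prop :=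
  0 <= s /\ eigenvalue (ctmx M *m M) (s ^+ 2).

Definition smallest_nz_sing_val (p q : nat) (M : 'M[C]_(p, q)) (s : C) : Prop :=
  [/\ 0 < s, sing_val M s & forall t, 0 < t -> sing_val M t -> s <= t].

Variables (m n : nat) (r : 'I_m -> nat) (A : forall j : 'I_m, 'M[C]_(r j, n)).

Definition Astack : 'M[C]_(\sum_j r j, n) := \mxcol_(j < m) A j.

Definition Dmat (g : C) : 'M[C]_(\sum_j r j) :=
  \mxdiag_(i < m) (g%:M + A i *m ctmx (A i)).

Definition Lmat : 'M[C]_(\sum_j r j) :=
  \mxblock_(i < m, j < m) (if (j < i)%N then A i *m ctmx (A j) else 0).

Definition Mmat (g : C) : 'M[C]_(\sum_j r j) := invmx (Dmat g + Lmat).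
Definition Qmat (g : C) : 'M[C]_n := ctmx Astack *m Mmat g *m Astack.
Definition Bmat (g : C) : 'M[C]_n := 1%:M - Qmat g.
End Defs.

(* Write N = D_g + L, M = N^-1, X = A^*, R = S M A with S^2 = D_{2g}, and
   B = I - A^* M A.  The proof rests on three facts.
   1. Splitting: g I + A A^* = D_g + L + L^*, hence S^2 + A A^* = N + N^*
      for real g.  From this alone N is invertible and B^* B = I - R^* R, so
      ||B y||^2 = ||y||^2 - ||R y||^2.
   2. Since ker R is contained in ker A, a unitary diagonalization of R^* R
      shows ||R y||^2 >= sigma^2 ||y||^2 on the range of A^*, where sigma is
      the smallest nonzero singular value of R; as P maps into that range,
      ||B P y||^2 <= (1 - sigma^2) ||y||^2.
   3. A right singular vector of R for sigma lies in the range of A^*, is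
      fixed by P, and attains this bound; in particular sigma <= 1.
   The file develops conjugate transposes and squared norms, the abstract
   spectral bound, the block splitting, then facts 1-3 for an arbitrary
   factorization S^2 + A A^* = N + N^*, and finally the theorem. *)

From HB Require Import structures.
From mathcomp Require Import all_boot all_order all_algebra.
Import Order.TTheory GRing.Theory Num.Theory.
Local Open Scope ring_scope.
Set Implicit Arguments. Unset Strict Implicit. Unset Printing Implicit Defensive.

Section ConjugateTranspose.
Variable C : numClosedFieldType.

Lemma ctmxK p q (X : 'M[C]_(p, q)) : ctmx (ctmx X) = X.
Proof. by apply/matrixP=> i j; rewrite !mxE conjCK. Qed.

Lemma ctmxM p q s (X : 'M[C]_(p, q)) (Y : 'M[C]_(q, s)) :
  ctmx (X *m Y) = ctmx Y *m ctmx X.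
Proof. by rewrite /ctmx map_mxM trmx_mul. Qed.

Lemma ctmxD p q (X Y : 'M[C]_(p, q)) : ctmx (X + Y) = ctmx X + ctmx Y.
Proof. by rewrite /ctmx map_mxD linearD. Qed.

Lemma ctmxN p q (X : 'M[C]_(p, q)) : ctmx (- X) = - ctmx X.
Proof. by rewrite /ctmx map_mxN linearN. Qed.

Lemma ctmxB p q (X Y : 'M[C]_(p, q)) : ctmx (X - Y) = ctmx X - ctmx Y.
Proof. by rewrite ctmxD ctmxN. Qed.

Lemma ctmxZ p q a (X : 'M[C]_(p, q)) : ctmx (a *: X) = Num.conj a *: ctmx X.
Proof. by apply/matrixP => i j; rewrite !mxE rmorphM. Qed.

Lemma ctmx0 p q : ctmx (0 : 'M[C]_(p, q)) = 0.
Proof. by apply/matrixP=> i j; rewrite !mxE conjC0. Qed.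

Lemma ctmx_scalar p (a : C) : ctmx (a%:M : 'M_p) = (Num.conj a)%:M.
Proof.
apply/matrixP=> i j; rewrite !mxE eq_sym.
by case: eqP => _; rewrite ?mulr1n ?mulr0n ?conjC0.
Qed.

Lemma ctmx1 p : ctmx (1%:M : 'M[C]_p) = 1%:M.
Proof. by rewrite ctmx_scalar conjC1. Qed.

Lemma ctmx_mxblock p q (p_ : 'I_p -> nat) (q_ : 'I_q -> nat)
    (B : forall i j, 'M[C]_(p_ i, q_ j)) :
  ctmx (\mxblock_(i, j) B i j) = \mxblock_(i, j) ctmx (B j i).
Proof. by apply/matrixP => i j; rewrite !mxE. Qed.

Lemma ctmx_mxcol p k (p_ : 'I_p -> nat) (B : forall i, 'M[C]_(p_ i, k)) :
  ctmx (\mxcol_i B i) = \mxrow_i ctmx (B i).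
Proof. by apply/matrixP => i j; rewrite !mxE. Qed.

(* Link with the notation [M ^t*] of the library's spectral theory. *)
Lemma trmxC_ctmx p q (X : 'M[C]_(p, q)) : map_mx Num.conj X^T = ctmx X.
Proof. by rewrite /ctmx map_trmx. Qed.

End ConjugateTranspose.

Section SquaredNorm.
Variable C : numClosedFieldType.

Definition sqnorm p (x : 'cV[C]_p) : C := (ctmx x *m x) 0 0.

Lemma sqnormE p (x : 'cV[C]_p) : sqnorm x = \sum_i `|x i 0| ^+ 2.
Proof. by rewrite /sqnorm mxE; apply: eq_bigr => i _; rewrite !mxE normCK mulrC. Qed.

Lemma vnorm_sqnorm p (x : 'cV[C]_p) : vnorm x = sqrtC (sqnorm x).
Proof. by rewrite sqnormE. Qed.

Lemma sqnorm_ge0 p (x : 'cV[C]_p) : 0 <= sqnorm x.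
Proof. by rewrite sqnormE; apply: sumr_ge0 => i _; rewrite exprn_ge0. Qed.

Lemma sqnorm_eq0 p (x : 'cV[C]_p) : sqnorm x = 0 -> x = 0.
Proof.
rewrite sqnormE => /psumr_eq0P x0; apply/matrixP => i j; rewrite ord1 mxE.
have /eqP := x0 (fun _ _ => exprn_ge0 _ (normr_ge0 _)) i isT.
by rewrite expf_eq0 /= normr_eq0 => /eqP.
Qed.

Lemma sqnorm_gt0 p (x : 'cV[C]_p) : x != 0 -> 0 < sqnorm x.
Proof.
move=> x_neq0; rewrite lt_def sqnorm_ge0 andbT.
by apply: contra x_neq0 => /eqP/sqnorm_eq0 ->.
Qed.

Lemma sqnorm_mul p q (R : 'M[C]_(p, q)) (y : 'cV[C]_q) :
  sqnorm (R *m y) = (ctmx y *m (ctmx R *m R) *m y) 0 0.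
Proof. by rewrite /sqnorm ctmxM !mulmxA. Qed.

(* An orthogonal projection does not increase the norm (Pythagoras). *)
Lemma sqnorm_proj_le p (P : 'M[C]_p) (x : 'cV[C]_p) :
  ctmx P = P -> P *m P = P -> sqnorm (P *m x) <= sqnorm x.
Proof.
move=> P_herm P_idem.
have gram_compl : ctmx (1%:M - P) *m (1%:M - P) = 1%:M - P.
  rewrite ctmxB ctmx1 P_herm !(mulmxDr, mulmxDl, mulmxN, mulNmx) !mul1mx.
  by rewrite !mulmx1 P_idem subrr addr0.
have pythagoras : sqnorm x = sqnorm (P *m x) + sqnorm ((1%:M - P) *m x).
  have entryD (X Y : 'M[C]_1) : (X + Y) 0 0 = X 0 0 + Y 0 0 by rewrite mxE.
  rewrite !sqnorm_mul P_herm P_idem gram_compl -entryD -mulmxDl -mulmxDr.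
  by rewrite addrC subrK mulmx1.
by rewrite pythagoras lerDl sqnorm_ge0.
Qed.

Lemma opnorm_attained p q (B : 'M[C]_(p, q)) (c : C) (x : 'cV[C]_q) :
  0 <= c -> (forall y, sqnorm (B *m y) <= c * sqnorm y) ->
  x != 0 -> sqnorm (B *m x) = c * sqnorm x ->
  is_opnorm B (sqrtC c).
Proof.
move=> c_ge0 Bbound x_neq0 Bx.
have sqrtM y : sqrtC (c * sqnorm y) = sqrtC c * sqrtC (sqnorm y).
  by rewrite sqrtCM ?nnegrE ?sqnorm_ge0.
split; first by rewrite sqrtC_ge0.
- move=> y; rewrite !vnorm_sqnorm -sqrtM ler_sqrtC ?Bbound //.
  + by rewrite nnegrE sqnorm_ge0.
  + by rewrite nnegrE mulr_ge0 ?sqnorm_ge0.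
- move=> t _ /(_ x); rewrite !vnorm_sqnorm Bx sqrtM.
  by rewrite ler_pM2r // sqrtC_gt0 sqnorm_gt0.
Qed.

End SquaredNorm.

Section Projection.
Variables (C : numClosedFieldType) (p k : nat) (P : 'M[C]_p) (X : 'M[C]_(p, k)).
Hypothesis P_proj : orth_proj_onto P X.

Lemma proj_fixes_range : P *m X = X.
Proof.
have [_ P_idem /andP [_ /submxP [V XV]]] := P_proj.
have -> : X = P *m V^T by rewrite -[X]trmxK XV trmx_mul trmxK.
by rewrite mulmxA P_idem.
Qed.

Lemma proj_into_range (x : 'cV[C]_p) : exists z, P *m x = X *m z.
Proof.
have [_ _ /andP [/submxP [W PW] _]] := P_proj.
by exists (W^T *m x); rewrite mulmxA -[P]trmxK PW trmx_mul trmxK.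
Qed.

End Projection.

Section SpectralBound.
Variables (C : numClosedFieldType) (k n : nat) (R : 'M[C]_(k, n)).

Let H := ctmx R *m R.
Let U := spectralmx H.
Let d := spectral_diag H.

Lemma spectral_unitary : U *m ctmx U = 1%:M.
Proof. by move/unitarymxP: (spectral_unitarymx H); rewrite trmxC_ctmx. Qed.

Lemma gram_diagonalized : H = ctmx U *m diag_mx d *m U.
Proof.
have H_normal : H \is normalmx.
  by apply/normalmxP; rewrite trmxC_ctmx /H ctmxM ctmxK.
have := orthomx_spectralP H_normal.
by rewrite invmx_unitary ?spectral_unitarymx // trmxC_ctmx.
Qed.

Lemma sqnorm_unitary (y : 'cV[C]_n) : sqnorm (U *m y) = sqnorm y.
Proof.
by rewrite sqnorm_mul (mulmx1C spectral_unitary) mulmx1.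
Qed.

Lemma sqnorm_spectral (y : 'cV[C]_n) :
  sqnorm (R *m y) = \sum_j d 0 j * `|(U *m y) j 0| ^+ 2.
Proof.
rewrite sqnorm_mul -/H gram_diagonalized.
have -> : ctmx y *m (ctmx U *m diag_mx d *m U) *m y
    = ctmx (U *m y) *m diag_mx d *m (U *m y) by rewrite ctmxM !mulmxA.
rewrite mul_mx_diag !mxE; apply: eq_bigr => j _; rewrite !mxE normCK.
by rewrite mulrAC mulrC (mulrC (_ ^*)).
Qed.

(* The j-th row u_j of U is a unit eigenvector of H for d_j, so that
   d_j = ||R u_j^*||^2. *)
Lemma spectral_row_eigen (j : 'I_n) : row j U *m H = d 0 j *: row j U.
Proof.
rewrite gram_diagonalized !mulmxA -row_mul spectral_unitary row1.
by rewrite -rowE row_diag_mx -scalemxAl -rowE.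
Qed.

Lemma spectral_row_unit (j : 'I_n) : (row j U *m ctmx (row j U)) 0 0 = 1.
Proof.
have -> : (row j U *m ctmx (row j U)) 0 0 = (U *m ctmx U) j j.
  by rewrite !mxE; apply: eq_bigr => l _; rewrite !mxE.
by rewrite spectral_unitary mxE eqxx.
Qed.

Lemma spectral_diag_sqnorm (j : 'I_n) : d 0 j = sqnorm (R *m ctmx (row j U)).
Proof.
by rewrite sqnorm_mul ctmxK -/H spectral_row_eigen -scalemxAl mxE
  spectral_row_unit mulr1.
Qed.

Lemma spectral_sing_val (j : 'I_n) : 0 < d 0 j -> sing_val R (sqrtC (d 0 j)).
Proof.
move=> d_gt0; split; first by rewrite sqrtC_ge0 ltW.
rewrite sqrtCK; apply/eigenvalueP; exists (row j U); first exact: spectral_row_eigen.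
apply/eqP => u0; have := spectral_row_unit j.
by rewrite u0 mul0mx mxE => /eqP; rewrite eq_sym oner_eq0.
Qed.

Lemma range_sing_val_bound l (X : 'M[C]_(n, l)) (s : C) (z : 'cV[C]_l) :
  (forall u : 'cV[C]_n, R *m u = 0 -> ctmx X *m u = 0) -> 0 <= s ->
  (forall t, 0 < t -> sing_val R t -> s <= t) ->
  s ^+ 2 * sqnorm (X *m z) <= sqnorm (R *m (X *m z)).
Proof.
move=> ker_sub s_ge0 s_min.
rewrite sqnorm_spectral -sqnorm_unitary sqnormE mulr_sumr; apply: ler_sum => j _.
set w := U *m (X *m z).
have [-> | wj_neq0] := eqVneq (w j 0) 0; first by rewrite normr0 expr0n !mulr0.
have d_gt0 : 0 < d 0 j.
  rewrite lt_def spectral_diag_sqnorm sqnorm_ge0 andbT.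
  apply: contra wj_neq0 => /eqP /sqnorm_eq0 /ker_sub Xu0.
  have -> : w j 0 = (ctmx (ctmx X *m ctmx (row j U)) *m z) 0 0.
    by rewrite ctmxM !ctmxK /w !mulmxA -!row_mul [RHS]mxE.
  by rewrite Xu0 ctmx0 mul0mx mxE.
have s_le : s <= sqrtC (d 0 j).
  by apply: s_min; [rewrite sqrtC_gt0 | exact: spectral_sing_val].
rewrite ler_wpM2r ?exprn_ge0 // -[d 0 j]sqrtCK ler_pXn2r // nnegrE sqrtC_ge0.
exact: ltW.
Qed.

End SpectralBound.

Section Splitting.
Variables (C : numClosedFieldType) (m n : nat) (r : 'I_m -> nat).
Variable A : forall j : 'I_m, 'M[C]_(r j, n).

Lemma Dmat_shift (a b : C) : Dmat A (a + b) = a%:M + Dmat A b.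
Proof.
rewrite /Dmat -mxdiagZ -mxdiagD; apply: eq_mxdiag => i.
by rewrite addrA -raddfD.
Qed.

Lemma Dmat_hermitian (g : C) : Num.conj g = g -> ctmx (Dmat A g) = Dmat A g.
Proof.
move=> g_real; rewrite /Dmat /mxdiag ctmx_mxblock; apply: eq_mxblock => i j.
rewrite eq_sym; case: eqP => [<- | _]; last exact: ctmx0.
by rewrite !conform_mx_id ctmxD ctmx_scalar g_real ctmxM ctmxK.
Qed.

Lemma gram_splitting (g : C) :
  g%:M + Astack A *m ctmx (Astack A) = Dmat A g + Lmat A + ctmx (Lmat A).
Proof.
rewrite /Astack ctmx_mxcol mul_mxcol_mxrow /Dmat /Lmat -mxdiagZ /mxdiag.
rewrite ctmx_mxblock -!mxblockD; apply: eq_mxblock => i j.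
case: (ltngtP i j) => [lt_ord | lt_ord | /val_inj <-]; last first.
  by rewrite eqxx !conform_mx_id ctmx0 !addr0.
all: case: eqP => [i_eq_j | _]; first by rewrite i_eq_j ltnn in lt_ord.
- by rewrite ctmx0 addr0.
- by rewrite ctmxM ctmxK !add0r.
Qed.

Lemma splitting_identity (g : C) : Num.conj g = g ->
  Dmat A (2 * g) + Astack A *m ctmx (Astack A)
  = (Dmat A g + Lmat A) + ctmx (Dmat A g + Lmat A).
Proof.
move=> g_real.
rewrite mulr2n mulrDl !mul1r Dmat_shift -addrA addrCA gram_splitting.
by rewrite ctmxD Dmat_hermitian // addrACA -!addrA.
Qed.

End Splitting.

Section Eigen.
Variable C : numClosedFieldType.

Lemma posdef_inj k (S : 'M[C]_k) (w : 'cV[C]_k) :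
  herm_posdef S -> S *m w = 0 -> w = 0.
Proof.
move=> [_ S_pos] Sw0; apply/eqP; apply: contraT => w_neq0.
by have := S_pos w w_neq0; rewrite -mulmxA Sw0 mulmx0 mxE ltxx.
Qed.

Lemma sing_val_vector k n (R : 'M[C]_(k, n)) (s : C) : sing_val R s ->
  exists2 x : 'cV[C]_n, x != 0 & ctmx R *m R *m x = s ^+ 2 *: x.
Proof.
move=> [s_ge0 /eigenvalueP [v vH v_neq0]].
exists (ctmx v); first by apply: contra v_neq0 => /eqP v0; rewrite -[v]ctmxK v0 ctmx0.
have gram_herm : ctmx (ctmx R *m R) = ctmx R *m R by rewrite ctmxM ctmxK.
by rewrite -{1}gram_herm -ctmxM vH ctmxZ geC0_conj ?exprn_ge0.
Qed.

End Eigen.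

Section Factorization.
Variables (C : numClosedFieldType) (k n : nat) (As : 'M[C]_(k, n)) (N S : 'M[C]_k).
Hypothesis S_posdef : herm_posdef S.
Hypothesis N_split : S *m S + As *m ctmx As = N + ctmx N.

Let M := invmx N.
Let R := S *m M *m As.
Let B := 1%:M - ctmx As *m M *m As.

(* N + N^* is positive definite, so N v = 0 forces v = 0. *)
Lemma split_unitmx : N \in unitmx.
Proof.
rewrite -row_free_unit -kermx_eq0; apply/eqP/row_matrixP => i; rewrite row0.
set v := row i (kermx N).
have vN : v *m N = 0 by rewrite /v -row_mul mulmx_ker row0.
have form0 : (v *m (N + ctmx N) *m ctmx v) 0 0 = 0.
  rewrite mulmxDr mulmxDl vN mul0mx add0r.
  have -> : v *m ctmx N *m ctmx v = ctmx (v *m N *m ctmx v).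
    by rewrite !ctmxM ctmxK mulmxA.
  by rewrite vN mul0mx ctmx0 mxE.
have SS_form : (v *m (S *m S) *m ctmx v) 0 0 = sqnorm (S *m ctmx v).
  by rewrite sqnorm_mul ctmxK (proj1 S_posdef).
have AA_form : (v *m (As *m ctmx As) *m ctmx v) 0 0 = sqnorm (ctmx As *m ctmx v).
  by rewrite sqnorm_mul !ctmxK.
move: form0; rewrite -N_split mulmxDr mulmxDl mxE SS_form AA_form.
move/eqP; rewrite paddr_eq0 ?sqnorm_ge0 // => /andP [/eqP/sqnorm_eq0 Sv0 _].
by rewrite -[v]ctmxK (posdef_inj S_posdef Sv0) ctmx0.
Qed.

Lemma gram_B : ctmx B *m B = 1%:M - ctmx R *m R.
Proof.
have NM : N *m M = 1%:M := mulmxV split_unitmx.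
have SS : S *m S = N + ctmx N - As *m ctmx As by rewrite -N_split addrK.
have middle : ctmx M *m (S *m S) *m M = ctmx M + M - ctmx M *m As *m ctmx As *m M.
  rewrite SS !(mulmxDr, mulmxDl, mulmxN, mulNmx) -mulmxA NM mulmx1.
  by rewrite -ctmxM NM ctmx1 mul1mx !mulmxA.
rewrite /R /B !ctmxM (proj1 S_posdef) ctmxB ctmx1 !ctmxM ctmxK.
have -> : ctmx As *m (ctmx M *m S) *m (S *m M *m As)
    = ctmx As *m (ctmx M *m (S *m S) *m M) *m As by rewrite !mulmxA.
rewrite middle !(mulmxDr, mulmxDl, mulmxN, mulNmx) !mul1mx !mulmx1 !mulmxA.
by rewrite !opprD !opprK !addrA.
Qed.

Lemma sqnorm_B (y : 'cV[C]_n) : sqnorm (B *m y) = sqnorm y - sqnorm (R *m y).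
Proof.
rewrite (sqnorm_mul B) (sqnorm_mul R) gram_B mulmxBr mulmx1 mulmxBl.
by rewrite [LHS]mxE [X in _ + X]mxE.
Qed.

(* ker R is contained in ker A, because S and M are injective. *)
Lemma R_kernel (u : 'cV[C]_n) : R *m u = 0 -> As *m u = 0.
Proof.
rewrite /R -!mulmxA => /(posdef_inj S_posdef) Mu0.
by rewrite -[As *m u]mul1mx -(mulmxV split_unitmx) -mulmxA Mu0 mulmx0.
Qed.

Variables (P : 'M[C]_n) (sigma : C).
Hypothesis P_proj : orth_proj_onto P (ctmx As).
Hypothesis sigma_min : smallest_nz_sing_val R sigma.

(* A right singular vector x for sigma lies in the range of A^* (so P x = x),
   and there the norm bound is attained. *)
Lemma B_proj_attained :
  exists2 x, x != 0 & sqnorm (B *m (P *m x)) = (1 - sigma ^+ 2) * sqnorm x.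
Proof.
have [sigma_gt0 sigma_sv _] := sigma_min.
have [x x_neq0 Hx] := sing_val_vector sigma_sv.
have sigma2_neq0 : sigma ^+ 2 != 0 by rewrite expf_eq0 gt_eqF.
have x_range : x = ctmx As *m (sigma ^- 2 *: (ctmx (S *m M) *m (R *m x))).
  rewrite -scalemxAr !mulmxA -ctmxM; move: (Hx); rewrite !mulmxA => ->.
  by rewrite scalerA mulVf ?scale1r.
have Px : P *m x = x by rewrite {1}x_range mulmxA proj_fixes_range // -x_range.
exists x => //; rewrite Px sqnorm_B sqnorm_mul -mulmxA Hx -scalemxAr mxE.
by rewrite mulrBl mul1r.
Qed.

Lemma sigma_sq_le1 : sigma ^+ 2 <= 1.
Proof.
have [x x_neq0 Bx] := B_proj_attained.
rewrite -subr_ge0 -(pmulr_lge0 _ (sqnorm_gt0 x_neq0)) -Bx.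
exact: sqnorm_ge0.
Qed.

(* On the range of A^*, ||R y||^2 >= sigma^2 ||y||^2, hence the bound. *)
Lemma B_proj_bound (y : 'cV[C]_n) :
  sqnorm (B *m (P *m y)) <= (1 - sigma ^+ 2) * sqnorm y.
Proof.
have [sigma_gt0 _ sigma_le] := sigma_min.
have [P_herm P_idem _] := P_proj.
have ker_sub (u : 'cV[C]_n) : R *m u = 0 -> ctmx (ctmx As) *m u = 0.
  by rewrite ctmxK; exact: R_kernel.
have [z Py] := proj_into_range P_proj y.
have R_lower := range_sing_val_bound z ker_sub (ltW sigma_gt0) sigma_le.
rewrite Py sqnorm_B (le_trans (lerB (lexx _) R_lower)) //.
rewrite -{1}[sqnorm _]mul1r -mulrBl ler_wpM2l ?subr_ge0 ?sigma_sq_le1 //.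
by rewrite -Py sqnorm_proj_le.
Qed.

End Factorization.

Unset Implicit Arguments.
Set Strict Implicit.

Theorem lemma3p1 (C : numClosedFieldType) (m n : nat) (r : 'I_m -> nat)
    (A : forall j : 'I_m, 'M[C]_(r j, n)) (gamma : C) :
  (0 < m)%N -> 0 < gamma ->
  row_free (Astack A) ->
  forall (P : 'M[C]_n) (S : 'M[C]_(\sum_j r j)) (sigma : C),
    orth_proj_onto P (ctmx (Astack A)) ->
    herm_posdef S -> S *m S = Dmat A (2 * gamma) ->
    smallest_nz_sing_val (S *m Mmat A gamma *m Astack A) sigma ->
    sigma <= 1 /\ is_opnorm (Bmat A gamma *m P) (sqrtC (1 - sigma ^+ 2)).
Proof.
move=> _ gamma_gt0 _ P S sigma P_proj S_posdef S_sq sigma_min.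
have N_split : S *m S + Astack A *m ctmx (Astack A)
    = (Dmat A gamma + Lmat A) + ctmx (Dmat A gamma + Lmat A).
  by rewrite S_sq splitting_identity // geC0_conj // ltW.
have [sigma_gt0 _ _] := sigma_min.
have sigma2_le1 := sigma_sq_le1 S_posdef N_split P_proj sigma_min.
split.
  move: sigma2_le1; rewrite -[X in _ <= X](expr1n _ 2).
  by rewrite ler_pXn2r // nnegrE ?ler01 ?ltW.
have [x x_neq0 Bx] := B_proj_attained S_posdef N_split P_proj sigma_min.
apply: (opnorm_attained _ _ x_neq0).
- by rewrite subr_ge0.
- move=> y; rewrite -mulmxA.
  exact: (B_proj_bound S_posdef N_split P_proj sigma_min y).
- by rewrite -mulmxA.
Qed.
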